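(* Let $n \geq 2k \geq 4$. Suppose that $\mathcal F, \mathcal G \subset \binom{[n]}{k}$ are non-trivial, cross-intersecting, initial families. Then $$|\mathcal F| + |\mathcal G| \leq k+1 + \sum_{2 \leq i \leq k} \binom{k+1}{i}\binom{n-k-1}{k-i}.$$
   Context: $\binom{[n]}{k}$ is the collection of $k$-subsets of $[n]=\{1,\dots,n\}$. Families $\mathcal F,\mathcal G$ are cross-intersecting if $F\cap G\neq\emptyset$ for all $F\in\mathcal F$, $G\in\mathcal G$. A (non-empty) family is non-trivial if the intersection of all its members is empty. For $k$-sets $A=\{x_1<\dots<x_k\}$ and $B=\{y_1<\dots<y_k\}$ write $A \prec B$ if $x_i \leq y_i$ for all $1\le i\le k$. A family $\mathcal F\subset\binom{[n]}{k}$ is initial (shifted) if $A \prec B$ and $B\in\mathcal F$ imply $A \in \mathcal F$. *)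

From mathcomp Require Import all_boot all_order.
Set Implicit Arguments. Unset Strict Implicit. Unset Printing Implicit Defensive.

(* Ground set [n] is modelled by 'I_n = {0,...,n-1} (a relabelling i |-> i+1). *)

Definition sorted_elems (n : nat) (A : {set 'I_n}) : seq nat :=
  sort leq [seq val x | x <- enum A].

(* A ≺ B : both have the same size and x_i <= y_i for all i. *)
Definition shift_le (n : nat) (A B : {set 'I_n}) : bool :=
  all2 leq (sorted_elems A) (sorted_elems B).

Definition uniform (n k : nat) (FF : {set {set 'I_n}}) : Prop :=
  forall F, F \in FF -> #|F| = k.

Definition cross_intersecting (n : nat) (FF GG : {set {set 'I_n}}) : Prop :=
  forall F G, F \in FF -> G \in GG -> F :&: G != set0.

Definition non_trivial (n : nat) (FF : {set {set 'I_n}}) : Prop :=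
  FF != set0 /\ \bigcap_(F in FF) F = set0.

Definition initial (n k : nat) (FF : {set {set 'I_n}}) : Prop :=
  forall A B : {set 'I_n}, #|A| = k -> #|B| = k ->
    shift_le A B -> B \in FF -> A \in FF.

From mathcomp Require Import all_boot all_order.
From mathcomp Require Import zify.
Set Implicit Arguments. Unset Strict Implicit. Unset Printing Implicit Defensive.

(* Let S = {0, ..., k}.  A non-trivial initial family has a member avoiding 0,
   and since that member dominates every S \ {a} in the shifting order, all the
   S \ {a} belong to the family.  Hence every member of the other family meets S
   in at least two points.  Members meeting S in k or k+1 points are k-subsets
   of S, at most k+1 per family; they account for the terms k+1 and i = k.
   For the members X with 2 <= |X ∩ S| <= k-1 we use a general estimate: two
   cross-intersecting j-uniform families on {0, ..., N-1}, one of them shifted,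
   have together at most as many members with a property P as there are j-sets
   with P, provided P is invariant under replacing an m-subset of {0, ..., 2m-1}
   by its complement there.  It is proved by induction on N, splitting both
   families according to whether they contain the point N-1; for N = 2j,
   complementation maps one family injectively into the sets missing the other. *)

Definition initseg n t : {set 'I_n} := [set x : 'I_n | x < t].

Lemma in_initseg n t (x : 'I_n) : (x \in initseg n t) = (x < t).
Proof. by rewrite inE. Qed.

Lemma card_initseg n t : #|initseg n t| = minn t n.
Proof.
have le_tn : minn t n <= n by apply: geq_minr.
have inj : injective (widen_ord le_tn) by move=> a b /(congr1 val) /= /val_inj.
rewrite -[minn t n]card_ord -(card_imset _ inj).
apply: eq_card => x; rewrite in_initseg; apply/idP/imsetP.
  move=> xt; have xm : x < minn t n by rewrite leq_min xt ltn_ord.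
  by exists (Ordinal xm) => //; apply: val_inj.
by case=> y _ ->; rewrite /= (leq_trans (ltn_ord y)) // geq_minl.
Qed.

Lemma initseg_subset n s t : s <= t -> initseg n s \subset initseg n t.
Proof. by move=> st; apply/subsetP => z; rewrite !in_initseg => /leq_trans; apply. Qed.

Lemma cardsU_disjoint (T : finType) (A B : {set T}) :
  [disjoint A & B] -> #|A :|: B| = #|A| + #|B|.
Proof. by move=> dAB; apply/eqP; rewrite (leq_card_setU A B).2. Qed.

Lemma card_sepC (T : finType) (A : {set T}) (p : pred T) :
  #|A| = #|[set x in A | p x]| + #|[set x in A | ~~ p x]|.
Proof.
rewrite -(cardsID [set x | p x] A); congr (_ + _); apply: eq_card => x.
  by rewrite !inE.
by rewrite !inE andbC.
Qed.

(** * The shifting order *)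

Lemma size_sorted_elems n (A : {set 'I_n}) : size (sorted_elems A) = #|A|.
Proof. by rewrite /sorted_elems size_sort size_map cardE. Qed.

Lemma sorted_sorted_elems n (A : {set 'I_n}) : sorted leq (sorted_elems A).
Proof. by apply: sort_sorted; exact: leq_total. Qed.

Lemma count_sorted_elems n (A : {set 'I_n}) t :
  count (fun x => x < t) (sorted_elems A) = #|A :&: initseg n t|.
Proof.
rewrite /sorted_elems (permP (permEl (perm_sort leq _))) count_map cardE.
rewrite (perm_size (enum_setI A (initseg n t))) size_filter.
by apply: eq_count => x; rewrite /= in_initseg.
Qed.

Lemma count_lt_path0 (b : nat) (s : seq nat) t :
  path leq b s -> t <= b -> count (fun x => x < t) s = 0.
Proof.
move=> /(order_path_min leq_trans) /allP bs tb; apply/eqP; rewrite -leqn0 leqNgt.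
by rewrite -has_count; apply/hasPn => x /bs /= bx; rewrite -leqNgt (leq_trans tb).
Qed.

Lemma all2_leq_count (s1 s2 : seq nat) :
  sorted leq s1 -> sorted leq s2 -> size s1 = size s2 ->
  (forall t, count (fun x => x < t) s2 <= count (fun x => x < t) s1) ->
  all2 leq s1 s2.
Proof.
elim: s1 s2 => [|a r IH] [|b q] //= so1 so2 [] sz cnt.
have ab : a <= b.
  have := cnt b.+1; rewrite ltnSn /=; case: leqP => // ba.
  by rewrite (count_lt_path0 so1 ba).
rewrite ab /=; apply: IH => //; [exact: path_sorted so1 | exact: path_sorted so2|].
move=> t; have := cnt t; case: (ltnP b t) => bt.
  by rewrite (leq_ltn_trans ab bt) !add1n ltnS.
by rewrite (count_lt_path0 so2 bt).
Qed.

Lemma shift_le_count n (A B : {set 'I_n}) :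
  #|A| = #|B| ->
  (forall t, #|B :&: initseg n t| <= #|A :&: initseg n t|) -> shift_le A B.
Proof.
move=> AB cnt; apply: all2_leq_count; rewrite ?sorted_sorted_elems //.
  by rewrite !size_sorted_elems.
by move=> t; rewrite !count_sorted_elems.
Qed.

Definition shifted n (G : {set {set 'I_n}}) :=
  forall X (x y : 'I_n), X \in G -> x \in X -> y \notin X -> y < x ->
    y |: (X :\ x) \in G.

Lemma card_shift n (X : {set 'I_n}) (x y : 'I_n) :
  x \in X -> y \notin X -> #|y |: (X :\ x)| = #|X|.
Proof.
by move=> xX yX; rewrite cardsU1 (cardsD1 x X) xX !inE (negbTE yX) andbF.
Qed.

Lemma initial_shifted n k (G : {set {set 'I_n}}) :
  uniform k G -> initial k G -> shifted G.
Proof.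
move=> uG iG X x y XG xX yX yx.
have cX := uG X XG.
apply: (iG _ X) => //; first by rewrite card_shift.
apply: shift_le_count; first by rewrite card_shift.
move=> t; case: (ltnP x t) => xt.
  rewrite (cardsD1 x (X :&: initseg n t)) !inE xX xt /=.
  have -> : 1 + #|(X :&: initseg n t) :\ x| = #|y |: ((X :&: initseg n t) :\ x)|.
    by rewrite cardsU1 !inE (negbTE yX) /= andbF.
  apply: subset_leq_card; apply/subsetP => z; rewrite !inE.
  case/orP=> [/eqP -> | /andP [zx /andP [zX zt]]].
    by rewrite eqxx /= (ltn_trans yx xt).
  by rewrite zx zX zt /= orbT.
apply: subset_leq_card; apply/subsetP => z; rewrite !inE => /andP [zX zt].
rewrite zX zt andbT; apply/orP; right; rewrite andbT; apply/eqP => zx.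
by move: zt; rewrite zx ltnNge xt.
Qed.

(** * Cross-intersecting families on an initial segment *)

Definition ksets n N j (P : pred {set 'I_n}) : {set {set 'I_n}} :=
  [set X : {set 'I_n} | (X \subset initseg n N) && (#|X| == j) && P X].
Arguments ksets n N j P : clear implicits.

Definition family_in n N j (F : {set {set 'I_n}}) :=
  forall X, X \in F -> (X \subset initseg n N) /\ #|X| = j.

(* [P] is invariant under complementing, inside {0, ..., 2m-1}, the m-element
   part of a j-set that has no other points below 2m. *)
Definition complement_closed n (P : pred {set 'I_n}) (N j : nat) :=
  forall (m : nat) (X Y : {set 'I_n}), m <= j ->
    X \subset initseg n (2 * m) -> #|X| = m ->
    (forall y : 'I_n, y \in Y -> (2 * m <= y) && (y < N)) -> #|Y| + m = j ->
    P (X :|: Y) -> P ((initseg n (2 * m) :\: X) :|: Y).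

Definition avoid n (e : 'I_n) (F : {set {set 'I_n}}) := [set X in F | e \notin X].
Definition link n (e : 'I_n) (F : {set {set 'I_n}}) := [set X :\ e | X in F & e \in X].

Lemma sep_sub_ksets n N j P (F : {set {set 'I_n}}) :
  family_in N j F -> [set X in F | P X] \subset ksets n N j P.
Proof.
move=> mF; apply/subsetP => X; rewrite !inE => /andP [XF PX].
by have [-> ->] := mF X XF; rewrite eqxx PX.
Qed.

Lemma cross_card_ksets0 n N P (F G : {set {set 'I_n}}) :
  family_in N 0 F -> family_in N 0 G -> cross_intersecting F G ->
  #|[set X in F | P X]| + #|[set X in G | P X]| <= #|ksets n N 0 P|.
Proof.
move=> mF mG cFG.
have [-> | [X]] := set_0Vmem [set X in F | P X].
  by rewrite cards0 add0n subset_leq_card // sep_sub_ksets.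
have [-> | [Y]] := set_0Vmem [set X in G | P X].
  by rewrite cards0 addn0 subset_leq_card // sep_sub_ksets.
rewrite !inE => /andP [YG _] /andP [XF _].
have := cFG X Y XF YG.
have [_ /cards0_eq ->] := mF X XF.
by have [_ /cards0_eq ->] := mG Y YG; rewrite setI0 eqxx.
Qed.

(* For N = 2j the complement in {0, ..., 2j-1} of a member of G misses every
   member of F, so F and the complements of G are disjoint. *)
Lemma cross_card_ksets_half n j P (F G : {set {set 'I_n}}) :
  2 * j <= n ->
  family_in (2 * j) j F -> family_in (2 * j) j G -> cross_intersecting F G ->
  complement_closed P (2 * j) j ->
  #|[set X in F | P X]| + #|[set X in G | P X]| <= #|ksets n (2 * j) j P|.
Proof.
move=> jn mF mG cFG Pc.
set A := [set X in F | P X]; set B := [set X in G | P X].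
set c := fun Y : {set 'I_n} => initseg n (2 * j) :\: Y.
have subB Y : Y \in B -> Y \subset initseg n (2 * j).
  by rewrite inE => /andP [/mG []].
have c_inj : {in B &, injective c}.
  move=> Y1 Y2 Y1B Y2B /(congr1 (setD (initseg n (2 * j)))).
  rewrite /c !setDDr !setDv !set0U.
  by rewrite (setIidPr (subB _ Y1B)) (setIidPr (subB _ Y2B)).
rewrite -(card_in_imset c_inj) -cardsU_disjoint.
  apply: subset_leq_card; apply/subsetP => Z.
  rewrite inE => /orP [ZA | /imsetP [Y YB ->]].
    exact: (subsetP (sep_sub_ksets P mF)).
  move: (YB); rewrite inE => /andP [YG PY]; have [Ysub cY] := mG Y YG.
  rewrite inE subsetDl /=; apply/andP; split.
    rewrite cardsD (setIidPr Ysub) card_initseg cY (minn_idPl jn).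
    by rewrite mul2n -addnn addnK.
  have := Pc j Y set0 (leqnn j) Ysub cY; rewrite !setU0; apply => //.
    by move=> y; rewrite inE.
  by rewrite cards0.
rewrite -setI_eq0; apply/set0Pn => -[Z]; rewrite !inE => /andP [/andP [ZF _] /imsetP [Y]].
rewrite inE => /andP [YG _] eZ; rewrite {Z}eZ in ZF.
case/set0Pn: (cFG _ Y ZF YG) => z; rewrite !inE.
by case/andP => /andP [/negP].
Qed.

Section LastPoint.

Variables (n N : nat) (e : 'I_n).
Hypothesis eN : val e = N.

Lemma in_initseg_pred (z : 'I_n) :
  z \in initseg n N.+1 -> z != e -> z \in initseg n N.
Proof.
rewrite !in_initseg ltnS leq_eqVlt => /orP [/eqP ze | //].
by rewrite -val_eqE /= ze eN eqxx.
Qed.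

Lemma notin_initseg_last (Y : {set 'I_n}) :
  (forall y : 'I_n, y \in Y -> y < N) -> e \notin Y.
Proof. by move=> Y_lt; apply/negP => /Y_lt; rewrite eN ltnn. Qed.

Lemma family_in_avoid j (F : {set {set 'I_n}}) :
  family_in N.+1 j F -> family_in N j (avoid e F).
Proof.
move=> mF X; rewrite inE => /andP [XF eX]; have [sX cX] := mF X XF.
split => //; apply/subsetP => z zX; apply: in_initseg_pred.
  exact: (subsetP sX).
by apply: contraNneq eX => <-.
Qed.

Lemma family_in_link j (F : {set {set 'I_n}}) :
  family_in N.+1 j.+1 F -> family_in N j (link e F).
Proof.
move=> mF Z /imsetP [X]; rewrite inE => /andP [XF eX] ->.
have [sX cX] := mF X XF; split.
  apply/subsetP => z /setD1P [ze zX]; apply: in_initseg_pred => //.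
  exact: (subsetP sX).
by move: cX; rewrite (cardsD1 e X) eX add1n => [[]].
Qed.

Lemma shifted_avoid j (G : {set {set 'I_n}}) :
  family_in N.+1 j G -> shifted G -> shifted (avoid e G).
Proof.
move=> mG sG X x y; rewrite !inE => /andP [XG eX] xX yX yx.
rewrite sG //= negb_or negb_and negbK eX !orbT andbT.
have [sX _] := mG X XG.
have xe : x != e by apply: contraNneq eX => <-.
have := in_initseg_pred (subsetP sX x xX) xe; rewrite in_initseg -eN => xN.
by apply: contraTneq xN => ->; rewrite -leqNgt ltnW.
Qed.

Lemma shifted_link j (G : {set {set 'I_n}}) :
  family_in N.+1 j G -> shifted G -> shifted (link e G).
Proof.
move=> mG sG Z x y /imsetP [X]; rewrite inE => /andP [XG eX] -> xZ yZ yx.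
move: xZ; rewrite !inE => /andP [xe xX].
have [sX _] := mG X XG.
have := in_initseg_pred (subsetP sX x xX) xe; rewrite in_initseg => xN.
have ye : y != e by apply: contraTneq (ltn_trans yx xN) => ->; rewrite eN ltnn.
have yX : y \notin X by move: yZ; rewrite !inE ye.
apply/imsetP; exists (y |: (X :\ x)).
  by rewrite inE sG //= !inE eX andbT (eq_sym e x) xe orbT.
apply/setP => z; rewrite !inE.
case: (eqVneq z y) => [-> | zy] /=; first by rewrite ye.
by rewrite andbCA.
Qed.

(* If the links of X and Y were disjoint, some point y < N would lie in
   neither (they have 2j < N points together); shifting N to y in Y gives a
   member of G that misses X. *)
Lemma cross_link j (F G : {set {set 'I_n}}) :
  N <= n -> 2 * j.+1 <= N ->
  family_in N.+1 j.+1 F -> family_in N.+1 j.+1 G -> shifted G ->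
  cross_intersecting F G -> cross_intersecting (link e F) (link e G).
Proof.
move=> Nn jN mF mG sG cFG X' Y' /imsetP [X]; rewrite inE => /andP [XF eX] ->.
move=> /imsetP [Y]; rewrite inE => /andP [YG eY] ->.
apply/negP => /eqP XY0.
have [_ cX] := mF X XF; have [_ cY] := mG Y YG.
have cX' : #|X :\ e| = j by move: cX; rewrite (cardsD1 e X) eX add1n => [[]].
have cY' : #|Y :\ e| = j by move: cY; rewrite (cardsD1 e Y) eY add1n => [[]].
have : ~~ (initseg n N \subset (X :\ e) :|: (Y :\ e)).
  apply/negP => /subset_leq_card; rewrite card_initseg (minn_idPl Nn) => cN.
  by have := leq_trans cN (leq_card_setU _ _); rewrite cX' cY'; lia.
case/subsetPn => y; rewrite in_initseg !inE negb_or => yN /andP [yX' yY'].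
have ye : y != e by apply: contraTneq yN => ->; rewrite eN ltnn.
have yY : y \notin Y by move: yY'; rewrite ye.
have ylt : y < e by rewrite eN.
case/set0Pn: (cFG X _ XF (sG Y e y YG eY yY ylt)) => z.
rewrite !inE => /andP [zX /orP [/eqP zy | /andP [ze zY]]].
  by move: yX'; rewrite ye /= -zy zX.
have : z \in (X :\ e) :&: (Y :\ e) by rewrite !inE ze zX zY.
by rewrite XY0 inE.
Qed.

Lemma complement_closed_avoid (P : pred {set 'I_n}) j :
  complement_closed P N.+1 j -> complement_closed P N j.
Proof.
move=> Pc m X Y mj sX cX Yel cY PXY; apply: Pc => // y /Yel /andP [-> /ltnW].
by rewrite ltnS.
Qed.

Lemma complement_closed_link (P : pred {set 'I_n}) j :
  2 * j.+1 <= N -> complement_closed P N.+1 j.+1 ->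
  complement_closed (fun X => P (e |: X)) N j.
Proof.
move=> jN Pc m X Y mj sX cX Yel cY PXY.
have eY : e \notin Y by apply: notin_initseg_last => y /Yel /andP [].
rewrite /= setUCA; apply: Pc => //.
- exact: leq_trans mj _.
- move=> y; rewrite !inE => /orP [/eqP -> | /Yel /andP [-> /ltnW]].
    by rewrite eN ltnSn andbT; lia.
  by rewrite ltnS.
- by rewrite cardsU1 eY add1n addSn cY.
- by rewrite setUCA.
Qed.

Lemma card_sep_split (P : pred {set 'I_n}) (F : {set {set 'I_n}}) :
  #|[set X in F | P X]| <=
    #|[set X in avoid e F | P X]| + #|[set X in link e F | P (e |: X)]|.
Proof.
rewrite -(cardsID [set X : {set 'I_n} | e \in X] [set X in F | P X]) addnC.
apply: leq_add.
  by apply: subset_leq_card; apply/subsetP => X; rewrite !inE => /and3P [-> -> ->].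
have inj : {in [set X in F | P X] :&: [set X : {set 'I_n} | e \in X] &,
             injective (fun X => X :\ e)}.
  move=> X1 X2; rewrite !inE => /andP [_ e1] /andP [_ e2] E.
  by rewrite -(setD1K e1) -(setD1K e2) E.
rewrite -(card_in_imset inj); apply: subset_leq_card; apply/subsetP => Z.
case/imsetP => X; rewrite !inE => /andP [/andP [XF PX] eX] ->.
by rewrite (setD1K eX) PX andbT; apply/imsetP; exists X; rewrite // inE XF eX.
Qed.

Lemma card_ksets_split (P : pred {set 'I_n}) j :
  #|ksets n N j.+1 P| + #|ksets n N j (fun X => P (e |: X))| <=
    #|ksets n N.+1 j.+1 P|.
Proof.
have e_notin (X : {set 'I_n}) : X \subset initseg n N -> e \notin X.
  by move=> sX; apply: notin_initseg_last => y /(subsetP sX); rewrite in_initseg.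
rewrite -(cardsID [set X : {set 'I_n} | e \in X] (ksets n N.+1 j.+1 P)).
rewrite [X in _ <= X]addnC; apply: leq_add.
  apply: subset_leq_card; apply/subsetP => X; rewrite !inE.
  move=> /andP [/andP [sX cX] PX]; rewrite cX PX e_notin // !andbT.
  exact: subset_trans sX (initseg_subset _ _).
have inj : {in ksets n N j (fun X => P (e |: X)) &, injective (fun X => e |: X)}.
  move=> X1 X2; rewrite !inE => /andP [/andP [s1 _] _] /andP [/andP [s2 _] _] E.
  by rewrite -(setU1K (e_notin _ s1)) -(setU1K (e_notin _ s2)) E.
rewrite -(card_in_imset inj); apply: subset_leq_card; apply/subsetP => Z.
case/imsetP => X; rewrite !inE => /andP [/andP [sX /eqP cX] PX] ->.
rewrite PX setU11 cardsU1 e_notin // cX eqxx !andbT.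
apply/subsetP => z; rewrite !inE => /orP [/eqP -> | /(subsetP sX)].
  by rewrite eN.
by rewrite in_initseg => /ltnW.
Qed.

End LastPoint.

Lemma cross_card_ksets n N : forall j (P : pred {set 'I_n}) (F G : {set {set 'I_n}}),
  2 * j <= N -> N <= n -> family_in N j F -> family_in N j G -> shifted G ->
  cross_intersecting F G -> complement_closed P N j ->
  #|[set X in F | P X]| + #|[set X in G | P X]| <= #|ksets n N j P|.
Proof.
elim: N => [|N IH] [|j] P F G jN Nn mF mG sG cFG Pc.
- exact: cross_card_ksets0.
- by move: jN; rewrite mulnS.
- exact: cross_card_ksets0.
case: (ltngtP (2 * j.+1) N.+1) => [jN' | | jE]; last first.
- by move: mF mG Pc; rewrite -jE => *; apply: cross_card_ksets_half; rewrite // jE.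
- by rewrite ltnNge jN.
have Nn' : N < n by [].
pose e : 'I_n := Ordinal Nn'.
have eN : val e = N by [].
have jN2 : 2 * j.+1 <= N by [].
apply: leq_trans (card_ksets_split eN P j).
apply: leq_trans (leq_add (card_sep_split e P F) (card_sep_split e P G)) _.
rewrite addnACA; apply: leq_add.
  apply: IH => //; first exact: ltnW.
  - exact: family_in_avoid.
  - exact: family_in_avoid.
  - exact: shifted_avoid mG sG.
  - by move=> X Y; rewrite !inE => /andP [XF _] /andP [YG _]; apply: cFG.
  - exact: complement_closed_avoid.
apply: (IH j (fun X => P (e |: X))).
- by apply: leq_trans jN2; rewrite leq_mul2l leqnSn orbT.
- exact: ltnW.
- exact: family_in_link.
- exact: family_in_link.
- exact: shifted_link mG sG.
- exact: cross_link (ltnW Nn') jN2 mF mG sG cFG.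
- exact: complement_closed_link.
Qed.

(** * Counting by the trace on {0, ..., k} *)

Definition mid_trace n s (Z : {set 'I_n}) :=
  (2 <= #|Z :&: initseg n s|) && (#|Z :&: initseg n s| + 2 <= s).

Lemma complement_closed_mid_trace n s N j :
  s <= n -> complement_closed (@mid_trace n s) N j.
Proof.
move=> sn m X Y mj sX cX Yel cY.
set S := initseg n s.
have cS : #|S| = s by rewrite card_initseg (minn_idPl sn).
rewrite /mid_trace -/S.
case: (leqP s (2 * m)) => sm.
  have YS : Y :&: S = set0.
    apply/setP => z; rewrite !inE; apply/negP => /andP [/Yel /andP [mz _] zs].
    by move: (leq_trans sm mz); rewrite leqNgt zs.
  have trace Z : (Z :|: Y) :&: S = Z :&: S by rewrite setIUl YS setU0.
  rewrite !trace.
  have -> : (initseg n (2 * m) :\: X) :&: S = S :\: X.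
    apply/setP => z; rewrite !inE; case: (ltnP z s) => zs; rewrite ?andbF ?andbT //.
    by rewrite (leq_trans zs sm) andbT.
  have : #|S :\: X| + #|X :&: S| = s by rewrite setIC -cS addnC cardsID.
  lia.
have trace (Z : {set 'I_n}) :
    Z \subset initseg n (2 * m) -> #|(Z :|: Y) :&: S| = #|Z| + #|Y :&: S|.
  move=> sZ; rewrite setIUl (setIidPl (subset_trans sZ (initseg_subset n (ltnW sm)))).
  apply: cardsU_disjoint; rewrite -setI_eq0; apply/eqP/setP => z; rewrite !inE.
  apply/negP => /andP [/(subsetP sZ)]; rewrite in_initseg => zm.
  case/andP => /Yel /andP [mz _] _.
  by move: zm; rewrite ltnNge mz.
rewrite !trace ?subsetDl //.
have -> : #|initseg n (2 * m) :\: X| = m.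
  have mn : 2 * m <= n by apply: leq_trans (ltnW sm) sn.
  by rewrite cardsD (setIidPr sX) card_initseg cX (minn_idPl mn); lia.
by rewrite cX.
Qed.

Lemma card_sep_range (T : finType) (A : {set T}) (f : T -> nat) a b :
  #|[set x in A | (a <= f x) && (f x < b)]| =
    \sum_(a <= i < b) #|[set x in A | f x == i]|.
Proof.
elim: b => [|b IH].
  rewrite big_geq // (_ : [set x in A | _] = set0) ?cards0 //.
  by apply/setP => x; rewrite !inE ltn0 !andbF.
case: (leqP a b) => ab; last first.
  rewrite big_geq // (_ : [set x in A | _] = set0) ?cards0 //.
  apply/setP => x; rewrite !inE; case: (leqP a (f x)) => af; rewrite ?andbF //.
  by rewrite ltnS leqNgt (leq_trans ab af) !andbF.
rewrite big_nat_recr //= -IH -cardsU_disjoint.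
  apply: eq_card => x; rewrite !inE ltnS (leq_eqVlt (f x)).
  case: (eqVneq (f x) b) => [-> | _] /=; last by rewrite andbF orbF.
  by case: (x \in A); rewrite ab ltnn.
rewrite -setI_eq0; apply/eqP/setP => x; rewrite !inE.
by case: (eqVneq (f x) b) => [-> |]; rewrite ?ltnn !andbF.
Qed.

Lemma card_trace_eq_le n (S : {set 'I_n}) k i :
  #|[set X : {set 'I_n} | (#|X| == k) && (#|X :&: S| == i)]| <=
    'C(#|S|, i) * 'C(n - #|S|, k - i).
Proof.
set D := [set X : {set 'I_n} | _].
set D1 := [set A : {set 'I_n} | A \subset S & #|A| == i].
set D2 := [set B : {set 'I_n} | B \subset ~: S & #|B| == k - i].
have inj : {in D &, injective (fun X => (X :&: S, X :\: S))}.
  by move=> X1 X2 _ _ [E1 E2]; rewrite -(setID X1 S) -(setID X2 S) E1 E2.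
have -> : 'C(#|S|, i) * 'C(n - #|S|, k - i) = #|setX D1 D2|.
  rewrite cardsX /D1 /D2 !cards_draws; congr (_ * 'C(_, _)).
  by rewrite -[n in n - _](card_ord n) -(cardsC S) addKn.
rewrite -(card_in_imset inj); apply: subset_leq_card; apply/subsetP => Z.
case/imsetP => X; rewrite inE => /andP [/eqP cX /eqP cXS] ->.
rewrite !inE subsetIr cXS eqxx /=; apply/andP; split.
  by apply/subsetP => z; rewrite !inE => /andP [].
by rewrite -cX -cXS -(cardsID S X) addKn.
Qed.

Lemma card_ksets_mid_trace n k : k < n ->
  #|ksets n n k (@mid_trace n k.+1)| <=
    \sum_(2 <= i < k) 'C(k.+1, i) * 'C(n - k.+1, k - i).
Proof.
move=> kn; set S := initseg n k.+1.
have cS : #|S| = k.+1 by rewrite card_initseg (minn_idPl kn).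
pose D := [set X : {set 'I_n} | #|X| == k].
pose f := fun X : {set 'I_n} => #|X :&: S|.
apply: (@leq_trans #|[set X in D | (2 <= f X) && (f X < k)]|).
  apply: subset_leq_card; apply/subsetP => X; rewrite !inE /mid_trace -/S /f.
  by case/andP => /andP [_ ->] /andP [-> h] /=; move: h; rewrite addn2 ltnS.
rewrite card_sep_range; apply: leq_sum => i _.
rewrite -cS; apply: leq_trans (card_trace_eq_le S k i).
by apply: eq_leq; apply: eq_card => X; rewrite !inE.
Qed.

Lemma card_sep_not_mid_trace n k (A : {set {set 'I_n}}) : k < n -> uniform k A ->
  (forall X, X \in A -> 2 <= #|X :&: initseg n k.+1|) ->
  #|[set X in A | ~~ mid_trace k.+1 X]| <= k.+1.
Proof.
move=> kn uA trA; set S := initseg n k.+1.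
have cS : #|S| = k.+1 by rewrite card_initseg (minn_idPl kn).
apply: (@leq_trans 'C(#|S|, k)); last by rewrite cS binSn.
rewrite -cards_draws; apply: subset_leq_card; apply/subsetP => X.
rewrite !inE => /andP [XA notP]; have cX := uA X XA.
have le_trace : #|X :&: S| <= #|X| by apply/subset_leq_card/subsetIl.
have trace_full : #|X :&: S| = #|X|.
  move: notP; rewrite /mid_trace trA //= -ltnNge addn2 !ltnS => ge.
  by apply/eqP; rewrite eqn_leq le_trace cX.
by rewrite cX eqxx andbT; apply/setIidPl/eqP; rewrite eqEcard subsetIl trace_full /=.
Qed.

(* A member F0 of the family avoids 0, so below every threshold it has fewer
   points than S \ {a}, i.e. S \ {a} precedes F0 in the shifting order. *)
Lemma initial_punctured_initseg n k (FF : {set {set 'I_n}}) : k < n ->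
  uniform k FF -> initial k FF -> non_trivial FF ->
  forall a, a \in initseg n k.+1 -> initseg n k.+1 :\ a \in FF.
Proof.
move=> kn uF iF [_ capF] a aS.
pose o0 : 'I_n := Ordinal (leq_ltn_trans (leq0n k) kn).
have [F0 F0F oF0] : exists2 F0, F0 \in FF & o0 \notin F0.
  apply/exists_inP; apply: contraT; rewrite negb_exists_in => /forall_inP o0_in.
  suff : o0 \in \bigcap_(F in FF) F by rewrite capF inE.
  by apply/bigcapP => F /o0_in; rewrite negbK.
set S := initseg n k.+1.
have cS : #|S| = k.+1 by rewrite card_initseg (minn_idPl kn).
have cSa : #|S :\ a| = k by move: cS; rewrite (cardsD1 a S) aS add1n => [[]].
apply: (iF _ F0) => //; first exact: uF.
apply: shift_le_count => [|t]; first by rewrite cSa uF.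
have F0_le_k : #|F0 :&: initseg n t| <= k.
  by rewrite -(uF F0 F0F); apply/subset_leq_card/subsetIl.
have F0_le_t : #|F0 :&: initseg n t| + (0 < t) <= minn t n.
  rewrite -card_initseg (cardsD1 o0 (initseg n t)) in_initseg addnC leq_add2l.
  apply: subset_leq_card; apply/subsetP => z; rewrite !inE => /andP [zF ->].
  by rewrite andbT; apply: contraNneq oF0 => <-.
have card_St : minn k.+1 t <= 1 + #|(S :\ a) :&: initseg n t|.
  have -> : minn k.+1 t = #|S :&: initseg n t|.
    have -> : S :&: initseg n t = initseg n (minn k.+1 t).
      by apply/setP => z; rewrite !inE leq_min.
    by rewrite card_initseg; apply/esym/minn_idPl; apply: leq_trans (geq_minl _ _) kn.
  rewrite (cardsD1 a); apply: leq_add; first by case: (_ \in _).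
  by apply: subset_leq_card; apply/subsetP => z; rewrite !inE => /and3P [-> -> ->].
by move: F0_le_t F0_le_k card_St; case: t => [|t] /=; lia.
Qed.

Lemma meet_ge2 n (S : {set 'I_n}) (A B : {set {set 'I_n}}) :
  S != set0 -> cross_intersecting A B -> (forall a, a \in S -> S :\ a \in B) ->
  forall X, X \in A -> 2 <= #|X :&: S|.
Proof.
move=> /set0Pn [a0 a0S] cAB SaB X XA; rewrite leqNgt; apply/negP => small.
have [a aS XSa0] : exists2 a, a \in S & (X :&: S) :\ a = set0.
  have [XS0 | [a aXS]] := set_0Vmem (X :&: S).
    by exists a0; rewrite // XS0 set0D.
  exists a; first by move: aXS; rewrite inE => /andP [].
  by apply/cards0_eq; move: small; rewrite (cardsD1 a (X :&: S)) aXS; lia.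
by have := cAB X _ XA (SaB a aS); rewrite setIDA XSa0 eqxx.
Qed.

Lemma uniform_family_in n k (A : {set {set 'I_n}}) : uniform k A -> family_in n k A.
Proof.
by move=> uA X XA; split; [apply/subsetP => z _; rewrite in_initseg | exact: uA].
Qed.

Theorem theorem1p6 (n k : nat) (FF GG : {set {set 'I_n}}) :
  4 <= 2 * k -> 2 * k <= n ->
  uniform k FF -> uniform k GG ->
  non_trivial FF -> non_trivial GG ->
  cross_intersecting FF GG ->
  initial k FF -> initial k GG ->
  #|FF| + #|GG| <= k + 1 + \sum_(2 <= i < k.+1) 'C(k.+1, i) * 'C(n - k - 1, k - i).
Proof.
move=> k2 kn uF uG ntF ntG cFG iF iG.
have kn1 : k < n by lia.
have S0 : initseg n k.+1 != set0.
  by apply/set0Pn; exists (Ordinal kn1); rewrite in_initseg.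
have cGF : cross_intersecting GG FF by move=> X Y XG YF; rewrite setIC; apply: cFG.
have trF := meet_ge2 S0 cFG (initial_punctured_initseg kn1 uG iG ntG).
have trG := meet_ge2 S0 cGF (initial_punctured_initseg kn1 uF iF ntF).
have := cross_card_ksets kn (leqnn n) (uniform_family_in uF) (uniform_family_in uG)
  (initial_shifted uG iG) cFG (complement_closed_mid_trace kn1).
have := card_ksets_mid_trace kn1.
have := card_sep_not_mid_trace kn1 uF trF; have := card_sep_not_mid_trace kn1 uG trG.
rewrite big_nat_recr /=; last by lia.
rewrite subnn bin0 muln1 binSn -subnDA addn1.
rewrite (card_sepC FF (@mid_trace n k.+1)) (card_sepC GG (@mid_trace n k.+1)).
move=> notG notF ksets_le sep_le; rewrite addnACA [X in _ <= X]addnCA.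
exact: leq_add (leq_trans sep_le ksets_le) (leq_add notF notG).
Qed.
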